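(* Let $n,f,\ell,p$ be positive integers with $f$ even, $n=pf$ and $\ell+3\le f/2$. Let $\mathcal{C}_1\subseteq\{0,1\}^{f/2}$ be the set of binary sequences $\mathbf{a}=(a_1,\dots,a_{f/2})$ that begin with $0^\ell1$, end with $1$, and such that $(a_{\ell+1},\dots,a_{f/2})$ does not contain $0^\ell$ as a substring. Let $\mathcal{C}_2\subseteq\{0,1\}^{f/2}$ be the set of binary sequences of length $f/2$ that end with $1$, contain $01^\ell0$ as a substring, and do not contain $0^\ell$ as a substring. Let $\mathcal{C}=\{\mathbf{a}_1\mathbf{a}_2\cdots\mathbf{a}_{2p}:\mathbf{a}_1\in\mathcal{C}_1,\ \mathbf{a}_2,\dots,\mathbf{a}_{2p}\in\mathcal{C}_2\}\subseteq\{0,1\}^n$ (concatenation). Then $\mathcal{C}$ is an MU code and $\mathcal{C}$ is an $f$-APD code.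
   Context: $0^\ell$ denotes $\ell$ zeros, $1^\ell$ denotes $\ell$ ones; a substring is a block of consecutive entries. For $\mathbf{a}=(a_1,\dots,a_n)$ write $\mathbf{a}_i^j=(a_i,\dots,a_j)$ if $i\le j$ and $(a_i,a_{i-1},\dots,a_j)$ if $i>j$; $\bar{\mathbf{a}}$ is the bitwise complement. A code $\mathcal{C}\subseteq\{0,1\}^n$ is MU (mutually uncorrelated) if for all not necessarily distinct $\mathbf{a},\mathbf{b}\in\mathcal{C}$ and all $1\le l<n$, $\mathbf{a}_1^l\ne\mathbf{b}_{n-l+1}^n$. It is $f$-APD if for all not necessarily distinct $\mathbf{a},\mathbf{b}\in\mathcal{C}$ and all $1\le i,j\le n+1-f$, $\bar{\mathbf{a}}_i^{f+i-1}\ne\mathbf{b}_j^{f+j-1}$ and $\bar{\mathbf{a}}_i^{f+i-1}\ne\mathbf{b}_{f+j-1}^{j}$. *)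

(* binary sequences are [seq bool] (false = 0, true = 1). *)
From mathcomp Require Import all_boot.
Set Implicit Arguments. Unset Strict Implicit. Unset Printing Implicit Defensive.

Definition code := seq bool -> Prop.

(* a_i^{j} for i <= j (1-indexed): window of length f starting at position i *)
Definition window (f i : nat) (a : seq bool) : seq bool := take f (drop i.-1 a).

Definition compl (a : seq bool) : seq bool := map negb a.

Definition is_MU (n : nat) (C : code) : Prop :=
  forall a b, C a -> C b -> forall l, 0 < l < n -> take l a <> drop (n - l) b.

(* f-APD code: for all a, b in C and 1 <= i, j <= n+1-f,
   compl(a_i^{f+i-1}) <> b_j^{f+j-1}  and  compl(a_i^{f+i-1}) <> b_{f+j-1}^{j}
   (the latter being the reversed window). *)
Definition is_APD (n f : nat) (C : code) : Prop :=
  forall a b, C a -> C b -> forall i j, 1 <= i <= n + 1 - f -> 1 <= j <= n + 1 - f ->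
    compl (window f i a) <> window f j b /\
    compl (window f i a) <> rev (window f j b).

Definition C1 (f l : nat) (a : seq bool) : Prop :=
  [/\ size a = f./2, prefix (rcons (nseq l false) true) a, last false a = true
    & ~~ infix (nseq l false) (drop l a)].

Definition C2 (f l : nat) (a : seq bool) : Prop :=
  [/\ size a = f./2, last false a = true,
      infix (false :: rcons (nseq l true) false) a
    & ~~ infix (nseq l false) a].

Definition Ccode (f l p : nat) : code := fun x =>
  exists (a1 : seq bool) (rest : seq (seq bool)),
    [/\ size rest = (2 * p).-1, C1 f l a1, (forall b, b \in rest -> C2 f l b)
      & x = a1 ++ flatten rest].

(* Every codeword starts with 0^l, ends with 1 and contains 0^l nowhere else:
   the tail of the C1 block and every C2 block avoid 0^l, and since every block
   ends with 1 no run of zeros straddles two blocks.  So a proper prefix of a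
   codeword is never a suffix of a codeword: a short one would be a run of
   zeros ending with the final 1, a long one would put 0^l away from the start.
   A window of length f = 2 (f/2) covers a whole C2 block, so its complement
   contains the palindrome 1 0^l 1, which occurs in no codeword. *)

From mathcomp Require Import all_boot zify.
Set Implicit Arguments. Unset Strict Implicit.

Section Infix.
Variable T : eqType.
Implicit Types (x : T) (s t u : seq T).

Lemma prefix_cat_split u s t : prefix u (s ++ t) ->
  prefix u s \/ exists2 u2, u = s ++ u2 & prefix u2 t.
Proof.
elim: s u => [|x s IHs] u /=; first by right; exists u.
case: u => [|y u] /=; first by left.
case/andP=> /eqP-> /IHs[us | [u2 -> pu2]]; first by left; rewrite /= eqxx.
by right; exists u2.
Qed.

Lemma infix_cat_split u s t : infix u (s ++ t) ->
  [\/ infix u s, infix u t | exists u1 u2, [/\ u = u1 ++ u2, u1 != [::],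
     u2 != [::], suffix u1 s & prefix u2 t]].
Proof.
elim: s => [|x s IHs] ust; first by constructor 2.
case/orP: ust => [/(@prefix_cat_split u (x :: s) t)[/prefixW us | [[|z u2] -> pu2]] | ].
- by constructor 1.
- by constructor 1; rewrite cats0 infix_refl.
- by constructor 3; exists (x :: s), (z :: u2); rewrite suffix_refl.
case/IHs=> [us | ut | [u1 [u2 [-> n1 n2 su1 pu2]]]].
- by constructor 1; rewrite infix_consl us orbT.
- by constructor 2.
- constructor 3; exists u1, u2; split=> //.
  exact: suffix_trans su1 (suffix_cons s x).
Qed.

Lemma infix_nseq_cat x m s t : (last x s != x) || (head x t != x) ->
  infix (nseq m x) (s ++ t) = infix (nseq m x) s || infix (nseq m x) t.
Proof.
move=> boundary; apply/idP/orP => [|[]]; last 2 first.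
- exact: infix_catr.
- exact: infix_catl.
case/infix_cat_split => [|| [u1 [u2 [E n1 n2 su1 pu2]]]]; [by left | by right |].
case: u1 E n1 su1 => [//|y w] E _ /suffixP[s' Es].
case: u2 E n2 pu2 => [//|z w2] E _ /prefixP[t' Et].
have onlyx c : c \in (y :: w) ++ z :: w2 -> c = x by rewrite -E => /nseqP[].
move: boundary; rewrite Es Et last_cat /=.
have -> : last y w = x by apply: onlyx; rewrite mem_cat mem_last.
have -> : z = x by apply: onlyx; rewrite mem_cat mem_head orbT.
by rewrite eqxx.
Qed.

Lemma infix_nseq_flatten x m (bs : seq (seq T)) : 0 < m ->
  {in bs, forall b, (last x b != x) && ~~ infix (nseq m x) b} ->
  ~~ infix (nseq m x) (flatten bs).
Proof.
move=> m_gt0; elim: bs => [|b bs IHbs] bsP.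
  by rewrite infixs0 -size_eq0 size_nseq -lt0n.
have /andP[lb nb] := bsP b (mem_head _ _).
rewrite infix_nseq_cat ?lb // negb_or nb IHbs // => c cbs.
by apply: bsP; rewrite inE cbs orbT.
Qed.

Lemma last_flatten x (bs : seq (seq T)) :
  {in bs, forall b, last x b = x} -> last x (flatten bs) = x.
Proof.
elim: bs => [|b bs IHbs] //= bsP; rewrite last_cat bsP ?mem_head // IHbs // => c cbs.
by apply: bsP; rewrite inE cbs orbT.
Qed.

Lemma infix_behead x u s : infix (x :: u) s -> infix u (behead s).
Proof.
case/infixP=> [[|y p] [q ->]] /=; first exact: prefix_infix.
by rewrite -cat1s catA infix_infix.
Qed.

Lemma infix_map (S : eqType) (g : T -> S) u s :
  infix u s -> infix (map g u) (map g s).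
Proof. by case/infixP=> [p [q ->]]; rewrite !map_cat infix_infix. Qed.

Lemma size_flatten_const h (bs : seq (seq T)) :
  {in bs, forall b, size b = h} -> size (flatten bs) = size bs * h.
Proof.
elim: bs => [|b bs IHbs] //= bsP; rewrite size_cat bsP ?mem_head // IHbs // => c cbs.
by apply: bsP; rewrite inE cbs orbT.
Qed.

Lemma flatten_window_block h i (bs : seq (seq T)) : 0 < h ->
  {in bs, forall b, size b = h} -> i + (h + h) <= size (flatten bs) ->
  exists2 b, b \in behead bs & infix b (take (h + h) (drop i (flatten bs))).
Proof.
move=> h_gt0; elim: bs i => [|b0 bs IHbs] i bsP /=; first lia.
have sb0 : size b0 = h by apply: bsP; rewrite mem_head.
have bsP' : {in bs, forall b, size b = h}.
  by move=> b bbs; apply: bsP; rewrite inE bbs orbT.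
rewrite size_cat sb0 drop_cat sb0 => win.
case: ltnP => [i_lt_h | h_le_i].
  case: bs {IHbs} bsP bsP' win => [|b1 bs] _ bsP' /=; first lia.
  have sb1 : size b1 = h by apply: bsP'; rewrite mem_head.
  exists b1; first exact: mem_head.
  rewrite take_cat size_drop sb0 ifN; last lia.
  rewrite take_cat sb1 ifN; last lia.
  exact: infix_infix.
have [|b bbs inf] := IHbs (i - h) bsP'; first lia.
by exists b => //; apply: mem_behead.
Qed.

End Infix.

Lemma is_MU_leading_zero_run n l (C : code) :
  (forall x, C x -> [/\ size x = n, prefix (nseq l false) x,
     last false x = true & ~~ infix (nseq l false) (behead x)]) ->
  is_MU n C.
Proof.
move=> CP a b /CP[_ pa _ _] /CP[sb _ lb nb] k /andP[k_gt0 k_lt_n] ab.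
have ta : take l a = nseq l false by move: pa; rewrite prefixE size_nseq => /eqP.
have [k_le_l | l_lt_k] := leqP k l.
  have := congr1 (nth false ^~ k.-1) ab.
  rewrite /= -(take_takel _ k_le_l) ta take_nseq // nth_nseq if_same nth_drop.
  by rewrite (_ : _ + _ = (size b).-1) ?nth_last ?lb //; rewrite sb; lia.
have tb : take l (drop (n - k) b) = nseq l false.
  by rewrite -ab take_takel ?ta // ltnW.
case/negP: nb; rewrite -tb.
have -> : drop (n - k) b = drop (n - k).-1 (behead b).
  by rewrite -drop1 drop_drop addn1 prednK // subn_gt0.
exact: infix_trans (infix_take _ _) (infix_drop _ _).
Qed.

Lemma is_APD_window_pattern n f l (C : code) :
  (forall x, C x -> ~~ infix (nseq l false) (behead x) /\
     forall i, 1 <= i <= n + 1 - f ->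
       infix (false :: rcons (nseq l true) false) (window f i x)) ->
  is_APD n f C.
Proof.
move=> CP a b /CP[_ wa] /CP[nb _] i j /wa pat_a _.
set z := true :: rcons (nseq l false) true.
have rev_z : rev z = z by rewrite rev_cons rev_rcons rev_nseq.
have z_a : infix z (compl (window f i a)).
  by have := infix_map negb pat_a; rewrite /= map_rcons map_nseq.
have z_b : ~~ infix z b.
  by apply: contra nb => /infix_behead; rewrite -cats1 => /catr_infix.
have wb : infix (window f j b) b := infix_trans (infix_take _ _) (infix_drop _ _).
split=> E; case/negP: z_b; apply: infix_trans wb.
  by rewrite -E.
by rewrite -rev_z infix_revLR -E.
Qed.

Section Codeword.
Variables (f l : nat) (a : seq bool) (bs : seq (seq bool)).
Hypotheses (l_gt0 : 0 < l) (a_C1 : C1 f l a) (bs_C2 : forall b, b \in bs -> C2 f l b).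

Lemma codeword_size : size (a ++ flatten bs) = (size bs).+1 * f./2.
Proof.
have [sa _ _ _] := a_C1.
by rewrite size_cat sa (size_flatten_const (h := f./2)) // => b /bs_C2[].
Qed.

Lemma codeword_prefix : prefix (nseq l false) (a ++ flatten bs).
Proof.
have [_ pa _ _] := a_C1.
exact/prefix_catl/(prefix_trans (prefix_rcons _ true)).
Qed.

Lemma codeword_last : last false (a ++ flatten bs) = true.
Proof.
have [_ _ la _] := a_C1.
rewrite last_cat la last_flatten // => b /bs_C2[_].
by case: b.
Qed.

Lemma codeword_behead : ~~ infix (nseq l false) (behead (a ++ flatten bs)).
Proof.
have [_ /prefixP[r ->] la na] := a_C1.
have zeros_bs : ~~ infix (nseq l false) (flatten bs).
  by apply: infix_nseq_flatten => // b /bs_C2[_ -> _ ->].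
have nseqS : nseq l false = false :: nseq l.-1 false by rewrite -(prednK l_gt0).
rewrite cat_rcons drop_size_cat ?size_nseq // in na.
rewrite last_cat last_rcons in la.
rewrite cat_rcons -catA [in behead _]nseqS /=.
rewrite infix_nseq_cat ?orbT // -cat_cons infix_nseq_cat; last by rewrite /= la.
rewrite (negbTE na) (negbTE zeros_bs) !orbF.
by apply/negP=> /size_infix; rewrite !size_nseq leqNgt ltn_predL l_gt0.
Qed.

Hypothesis f_even : ~~ odd f.

Lemma codeword_window i : i.-1 + f <= size (a ++ flatten bs) ->
  infix (false :: rcons (nseq l true) false) (window f i (a ++ flatten bs)).
Proof.
have [sa _ la _] := a_C1.
have f_half : f = f./2 + f./2 by rewrite addnn even_halfK.
have h_gt0 : 0 < f./2 by rewrite -sa lt0n size_eq0; apply: contraTneq la => ->.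
have blocks : {in a :: bs, forall b, size b = f./2}.
  by move=> b; rewrite inE => /predU1P[-> // | /bs_C2[]].
rewrite /window f_half => win.
have [b /bs_C2[_ _ pat _]] := flatten_window_block h_gt0 blocks win.
exact: infix_trans.
Qed.

End Codeword.

Lemma Ccode_invariants f l p x : 0 < l -> 0 < p -> ~~ odd f -> Ccode f l p x ->
  [/\ size x = p * f, prefix (nseq l false) x, last false x = true,
     ~~ infix (nseq l false) (behead x) &
     forall i, 1 <= i <= p * f + 1 - f ->
       infix (false :: rcons (nseq l true) false) (window f i x)].
Proof.
move=> l_gt0 p_gt0 f_even [a [bs [size_bs a_C1 bs_C2 ->]]].
have size_x : size (a ++ flatten bs) = p * f.
  rewrite (codeword_size a_C1 bs_C2) size_bs prednK ?muln_gt0 //.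
  by rewrite -[in RHS](even_halfK f_even) -mul2n mulnCA mulnA.
split=> //.
- exact: codeword_prefix a_C1.
- exact: codeword_last a_C1 bs_C2.
- exact: codeword_behead l_gt0 a_C1 bs_C2.
by move=> i /andP[i_gt0 i_le]; apply: codeword_window; rewrite // size_x; lia.
Qed.

Theorem lemma5 (n f l p : nat) :
  0 < n -> 0 < f -> 0 < l -> 0 < p -> ~~ odd f -> n = p * f -> l + 3 <= f./2 ->
  is_MU n (Ccode f l p) /\ is_APD n f (Ccode f l p).
Proof.
(* Neither the positivity of n and f nor the bound l + 3 <= f./2 is needed. *)
move=> _ _ l_gt0 p_gt0 f_even -> _.
split; [apply: (@is_MU_leading_zero_run _ l) | apply: (@is_APD_window_pattern _ _ l)];
  by move=> x /(Ccode_invariants l_gt0 p_gt0 f_even)[].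
Qed.
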